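(* Let $\varepsilon$ be a locally variational source form on $\mathbb{R}\times T^2M$. Then the local expressions $$\omega=\tfrac12\,D(x,y,0,0)\,dx\wedge dy$$ and $$\kappa=-\Big(\int_0^{\dot x}B_{xx}(x,y,\nu,\dot y)\,d\nu+\int_0^{\dot y}B_{xy}(x,y,0,\sigma)\,d\sigma\Big)dx-\Big(\int_0^{\dot x}B_{xy}(x,y,\nu,\dot y)\,d\nu+\int_0^{\dot y}B_{yy}(x,y,0,\sigma)\,d\sigma\Big)dy,$$ defined in each chart, are independent of the chart, i.e. they define a global $2$-form $\omega$ on $M$ (hence on $T^1M$) and a global $1$-form $\kappa$ on $T^1M$. Consequently $\alpha'-\omega=d\kappa$ holds globally on $T^1M$, where $\alpha'=\tfrac12 D\,dx\wedge dy+(B_{xx}dx+B_{xy}dy)\wedge d\dot x+(B_{xy}dx+B_{yy}dy)\wedge d\dot y$.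
   Context: Setting: $M$ is a smooth connected $2$-manifold, $Y=\mathbb{R}\times M$; $J^{1}Y\cong\mathbb{R}\times T^{1}M$, $J^{2}Y\cong\mathbb{R}\times T^{2}M$, with chart coordinates $(t,x,y,\dot x,\dot y)$, $(t,x,y,\dot x,\dot y,\ddot x,\ddot y)$ induced by charts $(x,y)$ on $M$ (tangent coordinates $\dot x,\dot y$ transform linearly under chart changes). Contact forms $\omega^x=dx-\dot x dt$, $\omega^y=dy-\dot y dt$. A source form $\varepsilon=(\varepsilon_x\omega^x+\varepsilon_y\omega^y)\wedge dt$ on $\mathbb{R}\times T^2M$ is locally variational iff locally it is the Euler–Lagrange form of a first-order Lagrangian; equivalently in every chart $\varepsilon_x=A_x+B_{xx}\ddot x+B_{xy}\ddot y$, $\varepsilon_y=A_y+B_{xy}\ddot x+B_{yy}\ddot y$ with $A_x,A_y,B_{xx},B_{xy},B_{yy}$ functions of $(x,y,\dot x,\dot y)$ satisfying the Helmholtz conditions: $\partial B_{xx}/\partial\dot y=\partial B_{xy}/\partial\dot x$, $\partial B_{yy}/\partial\dot x=\partial B_{xy}/\partial\dot y$, $\partial A_x/\partial\dot x-\dot x\,\partial B_{xx}/\partial x-\dot y\,\partial B_{xx}/\partial y=0$, $\partial A_y/\partial\dot y-\dot x\,\partial B_{yy}/\partial x-\dot y\,\partial B_{yy}/\partial y=0$, $\partial A_x/\partial\dot y+\partial A_y/\partial\dot x-2\dot x\,\partial B_{xy}/\partial x-2\dot y\,\partial B_{xy}/\partial y=0$, $\partial A_x/\partial y-\partial A_y/\partial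 x-\frac12\dot x\,\partial_x D-\frac12\dot y\,\partial_y D=0$, where $D=\partial A_x/\partial\dot y-\partial A_y/\partial\dot x$. *)

From Stdlib Require Import Reals.
From Coquelicot Require Import Coquelicot.
Open Scope R_scope.

(* A chart of M is modelled by coordinates (x,y); a chart change between the
   overlap images U (old coordinates) and V (new coordinates) is a
   diffeomorphism (p1,p2) : U -> V with inverse (q1,q2). Functions on T^1M
   in chart coordinates are functions of (x, y, xd, yd). *)

Definition d_x (f : R -> R -> R -> R -> R) x y a b := Derive (fun s => f s y a b) x.
Definition d_y (f : R -> R -> R -> R -> R) x y a b := Derive (fun s => f x s a b) y.
Definition d_xd (f : R -> R -> R -> R -> R) x y a b := Derive (fun s => f x y s b) a.
Definition d_yd (f : R -> R -> R -> R -> R) x y a b := Derive (fun s => f x y a s) b.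

Definition d2_x (g : R -> R -> R) x y := Derive (fun s => g s y) x.
Definition d2_y (g : R -> R -> R) x y := Derive (fun s => g x s) y.

Definition open2 (U : R -> R -> Prop) : Prop :=
  forall x y, U x y -> exists e : R, 0 < e /\
    forall x' y', Rabs (x' - x) < e -> Rabs (y' - y) < e -> U x' y'.

CoInductive smooth2_on (U : R -> R -> Prop) (g : R -> R -> R) : Prop :=
  Smooth2 :
    (forall x y, U x y -> continuous (fun p : R * R => g (fst p) (snd p)) (x, y)) ->
    (forall x y, U x y -> ex_derive (fun s => g s y) x /\ ex_derive (fun s => g x s) y) ->
    smooth2_on U (d2_x g) -> smooth2_on U (d2_y g) -> smooth2_on U g.

CoInductive smooth4_on (U : R -> R -> Prop) (f : R -> R -> R -> R -> R) : Prop :=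
  Smooth4 :
    (forall x y a b, U x y ->
       continuous (fun p : R * R * R * R =>
         f (fst (fst (fst p))) (snd (fst (fst p))) (snd (fst p)) (snd p)) (x, y, a, b)) ->
    (forall x y a b, U x y ->
       ex_derive (fun s => f s y a b) x /\ ex_derive (fun s => f x s a b) y /\
       ex_derive (fun s => f x y s b) a /\ ex_derive (fun s => f x y a s) b) ->
    smooth4_on U (d_x f) -> smooth4_on U (d_y f) ->
    smooth4_on U (d_xd f) -> smooth4_on U (d_yd f) -> smooth4_on U f.

Definition is_diffeo (U V : R -> R -> Prop) (p1 p2 q1 q2 : R -> R -> R) : Prop :=
  open2 U /\ open2 V /\
  smooth2_on U p1 /\ smooth2_on U p2 /\ smooth2_on V q1 /\ smooth2_on V q2 /\
  (forall x y, U x y ->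
     V (p1 x y) (p2 x y) /\ q1 (p1 x y) (p2 x y) = x /\ q2 (p1 x y) (p2 x y) = y) /\
  (forall X Y, V X Y ->
     U (q1 X Y) (q2 X Y) /\ p1 (q1 X Y) (q2 X Y) = X /\ p2 (q1 X Y) (q2 X Y) = Y).

Record coeffs := Coeffs {
  Ax : R -> R -> R -> R -> R;
  Ay : R -> R -> R -> R -> R;
  Bxx : R -> R -> R -> R -> R;
  Bxy : R -> R -> R -> R -> R;
  Byy : R -> R -> R -> R -> R }.

Definition eps_x (c : coeffs) x y a b a2 b2 :=
  Ax c x y a b + Bxx c x y a b * a2 + Bxy c x y a b * b2.
Definition eps_y (c : coeffs) x y a b a2 b2 :=
  Ay c x y a b + Bxy c x y a b * a2 + Byy c x y a b * b2.

Definition smooth_coeffs (U : R -> R -> Prop) (c : coeffs) : Prop :=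
  smooth4_on U (Ax c) /\ smooth4_on U (Ay c) /\ smooth4_on U (Bxx c) /\
  smooth4_on U (Bxy c) /\ smooth4_on U (Byy c).

Definition Dfun (c : coeffs) x y a b := d_yd (Ax c) x y a b - d_xd (Ay c) x y a b.

Definition helmholtz (U : R -> R -> Prop) (c : coeffs) : Prop :=
  forall x y a b, U x y ->
    d_yd (Bxx c) x y a b = d_xd (Bxy c) x y a b /\
    d_xd (Byy c) x y a b = d_yd (Bxy c) x y a b /\
    d_xd (Ax c) x y a b - a * d_x (Bxx c) x y a b - b * d_y (Bxx c) x y a b = 0 /\
    d_yd (Ay c) x y a b - a * d_x (Byy c) x y a b - b * d_y (Byy c) x y a b = 0 /\
    d_yd (Ax c) x y a b + d_xd (Ay c) x y a b
      - 2 * a * d_x (Bxy c) x y a b - 2 * b * d_y (Bxy c) x y a b = 0 /\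
    d_y (Ax c) x y a b - d_x (Ay c) x y a b
      - / 2 * a * d_x (Dfun c) x y a b - / 2 * b * d_y (Dfun c) x y a b = 0.

Definition loc_variational (U : R -> R -> Prop) (c : coeffs) : Prop :=
  smooth_coeffs U c /\ helmholtz U c.

(* kappa = - Kx dx - Ky dy *)
Definition Kx (c : coeffs) x y a b :=
  RInt (fun nu => Bxx c x y nu b) 0 a + RInt (fun s => Bxy c x y 0 s) 0 b.
Definition Ky (c : coeffs) x y a b :=
  RInt (fun nu => Bxy c x y nu b) 0 a + RInt (fun s => Byy c x y 0 s) 0 b.

(* The same source form eps expressed in chart 1 (coefficients c1, domain U)
   and chart 2 (coefficients c2, domain V), related by the chart change
   (X,Y) = (p1,p2)(x,y), with induced change of jet coordinates
   Xd = J (xd,yd), Xdd = J (xdd,ydd) + second-derivative terms, and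
   omega^X = J11 omega^x + J12 omega^y, omega^Y = J21 omega^x + J22 omega^y. *)
Definition same_source_form (U : R -> R -> Prop) (p1 p2 : R -> R -> R)
    (c1 c2 : coeffs) : Prop :=
  forall x y a b a2 b2, U x y ->
    let X := p1 x y in let Y := p2 x y in
    let J11 := d2_x p1 x y in let J12 := d2_y p1 x y in
    let J21 := d2_x p2 x y in let J22 := d2_y p2 x y in
    let Xd := J11 * a + J12 * b in let Yd := J21 * a + J22 * b in
    let Xdd := J11 * a2 + J12 * b2
       + d2_x (d2_x p1) x y * a * a + d2_y (d2_x p1) x y * a * b
       + d2_x (d2_y p1) x y * a * b + d2_y (d2_y p1) x y * b * b in
    let Ydd := J21 * a2 + J22 * b2
       + d2_x (d2_x p2) x y * a * a + d2_y (d2_x p2) x y * a * b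
       + d2_x (d2_y p2) x y * a * b + d2_y (d2_y p2) x y * b * b in
    eps_x c1 x y a b a2 b2 =
      eps_x c2 X Y Xd Yd Xdd Ydd * J11 + eps_y c2 X Y Xd Yd Xdd Ydd * J21 /\
    eps_y c1 x y a b a2 b2 =
      eps_x c2 X Y Xd Yd Xdd Ydd * J12 + eps_y c2 X Y Xd Yd Xdd Ydd * J22.

From Stdlib Require Import Reals Lra.
From Coquelicot Require Import Coquelicot.
Open Scope R_scope.

(* For fixed (x,y) the first two Helmholtz conditions say that the velocity
   1-forms B_xx da + B_xy db and B_xy da + B_yy db are closed, and kappa is
   their primitive vanishing at zero velocity.  The transformation law of the
   source form makes B a symmetric 2-tensor, so both sides of the
   transformation law of kappa have the same gradient in the velocities and
   vanish at zero velocity, hence agree.  The third to fifth Helmholtz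
   conditions give dD/da = 2 (dB_xx/dy - dB_xy/dx) and
   dD/db = 2 (dB_xy/dy - dB_yy/dx), and the same uniqueness argument yields
   dKx/dy - dKy/dx = (D(a,b) - D(0,0)) / 2.
   Finally, differentiating the transformation law of A at zero velocity,
   where the acceleration terms vanish to second order, shows that D(x,y,0,0)
   is multiplied by the Jacobian determinant. *)

(* Coquelicot's derivative rules are stated with the [plus]/[scal] of a
   normed module and do not unify with [Rplus]/[Rmult] goals directly. *)
Lemma is_derive_Rplus (f g : R -> R) x df dg :
  is_derive f x df -> is_derive g x dg -> is_derive (fun t => f t + g t) x (df + dg).
Proof. exact (@is_derive_plus R_AbsRing R_NormedModule f g x df dg). Qed.

Lemma is_derive_Rminus (f g : R -> R) x df dg :
  is_derive f x df -> is_derive g x dg -> is_derive (fun t => f t - g t) x (df - dg).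
Proof. exact (@is_derive_minus R_AbsRing R_NormedModule f g x df dg). Qed.

Lemma is_derive_Rmult (f g : R -> R) x df dg :
  is_derive f x df -> is_derive g x dg ->
  is_derive (fun t => f t * g t) x (df * g x + f x * dg).
Proof. intros Hf Hg. exact (@is_derive_mult R_AbsRing f g x df dg Hf Hg Rmult_comm). Qed.

Lemma is_derive_Rconst (k x : R) : is_derive (fun _ => k) x 0.
Proof. exact (@is_derive_const R_AbsRing R_NormedModule k x). Qed.

Lemma is_derive_replace (f : R -> R) x l l' : is_derive f x l -> l = l' -> is_derive f x l'.
Proof. now intros H <-. Qed.

Lemma is_derive_Rmult_const_r (f : R -> R) k x l :
  is_derive f x l -> is_derive (fun t => f t * k) x (l * k).
Proof.
  intros H. eapply is_derive_replace.
  - exact (is_derive_Rmult f (fun _ => k) x l 0 H (is_derive_Rconst k x)).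
  - simpl; ring.
Qed.

Lemma is_derive_Rmult_const_l (f : R -> R) k x l :
  is_derive f x l -> is_derive (fun t => k * f t) x (k * l).
Proof.
  intros H. eapply is_derive_replace.
  - exact (is_derive_Rmult (fun _ => k) f x 0 l (is_derive_Rconst k x) H).
  - simpl; ring.
Qed.

Lemma differentiable_pt_lim_of_partials (g gx gy : R -> R -> R) x y :
  (forall u v, is_derive (fun s => g s v) u (gx u v)) ->
  (forall u v, is_derive (fun s => g u s) v (gy u v)) ->
  continuity_2d_pt gx x y ->
  differentiable_pt_lim g x y (gx x y) (gy x y).
Proof.
  intros Hx Hy Cx. apply filterdiff_differentiable_pt_lim.
  apply (is_derive_filterdiff g x y gx).
  - apply filter_forall. intros [u v]. apply Hx.
  - apply Hy.
  - now apply continuity_2d_pt_filterlim.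
Qed.

Lemma is_derive_comp_2d (g gx gy : R -> R -> R) (f2 f3 : R -> R) t l2 l3 :
  (forall u v, is_derive (fun s => g s v) u (gx u v)) ->
  (forall u v, is_derive (fun s => g u s) v (gy u v)) ->
  continuity_2d_pt gx (f2 t) (f3 t) ->
  is_derive f2 t l2 -> is_derive f3 t l3 ->
  is_derive (fun s => g (f2 s) (f3 s)) t (gx (f2 t) (f3 t) * l2 + gy (f2 t) (f3 t) * l3).
Proof.
  intros Hx Hy Cx D2 D3. apply is_derive_Reals.
  apply derivable_pt_lim_comp_2d; [apply differentiable_pt_lim_of_partials | |];
    auto; now apply is_derive_Reals.
Qed.

Lemma eq_of_derive_0 (h : R -> R) : (forall t, is_derive h t 0) -> forall s, h s = h 0.
Proof.
  intros H s.
  destruct (MVT_cor4 h (fun _ => 0) 0 (Rabs (s - 0)) (fun c _ => H c) s (Rle_refl _))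
    as [c [E _]].
  lra.
Qed.

Lemma eq_of_partials (F G Fa Fb : R -> R -> R) :
  (forall a b, is_derive (fun s => F s b) a (Fa a b)) ->
  (forall a b, is_derive (fun s => G s b) a (Fa a b)) ->
  (forall a b, is_derive (fun s => F a s) b (Fb a b)) ->
  (forall a b, is_derive (fun s => G a s) b (Fb a b)) ->
  F 0 0 = G 0 0 -> forall a b, F a b = G a b.
Proof.
  intros HFa HGa HFb HGb H0 a b.
  assert (Da : forall b s, is_derive (fun r => F r b - G r b) s 0).
  { intros b' s. eapply is_derive_replace; [now apply is_derive_Rminus | apply Rminus_diag]. }
  assert (Db : forall s, is_derive (fun r => F 0 r - G 0 r) s 0).
  { intros s. eapply is_derive_replace; [now apply is_derive_Rminus | apply Rminus_diag]. }
  assert (E1 := eq_of_derive_0 _ (Da b) a). assert (E2 := eq_of_derive_0 _ Db b).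
  simpl in E1, E2. lra.
Qed.

Lemma schwarz_slice (h : R -> R -> R) (P : R -> Prop) u v :
  locally u P ->
  (forall s t, P s ->
     ex_derive (fun z => h z t) s /\ ex_derive (fun z => h s z) t /\
     ex_derive (fun z => Derive (fun w => h z w) t) s /\
     ex_derive (fun z => Derive (fun w => h w z) s) t) ->
  continuity_2d_pt (fun s t => Derive (fun z => Derive (fun w => h z w) t) s) u v ->
  continuity_2d_pt (fun s t => Derive (fun z => Derive (fun w => h w z) s) t) u v ->
  Derive (fun z => Derive (fun w => h z w) v) u =
  Derive (fun z => Derive (fun w => h w z) u) v.
Proof.
  intros [e He] Hd C1 C2. apply Schwarz; auto.
  exists e. intros s t Hs _. now apply Hd, He.
Qed.

Lemma is_derive_RInt_0 (g : R -> R) b :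
  (forall t, continuous g t) -> is_derive (fun s => RInt g 0 s) b (g b).
Proof.
  intros Hc. apply (is_derive_RInt g (fun s => RInt g 0 s) 0 b); auto.
  apply filter_forall. intros s.
  apply (RInt_correct g 0 s), ex_RInt_continuous. auto.
Qed.

Lemma is_derive_RInt_param_loc (h : R -> R -> R) (P : R -> Prop) p lo hi :
  locally p P ->
  (forall u t, P u -> ex_derive (fun z => h z t) u) ->
  (forall u t, P u -> continuous (h u) t) ->
  (forall t, continuity_2d_pt (fun u v => Derive (fun z => h z v) u) p t) ->
  is_derive (fun u => RInt (h u) lo hi) p (RInt (fun t => Derive (fun z => h z t) p) lo hi).
Proof.
  intros HP Hd Hc Hc2. apply (is_derive_RInt_param h lo hi p).
  - eapply filter_imp; [| exact HP]. intros u Hu t _. auto.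
  - auto.
  - eapply filter_imp; [| exact HP]. intros u Hu.
    apply (@ex_RInt_continuous R_CompleteNormedModule). auto.
Qed.

Lemma continuous_pair {T U V : UniformSpace} (f : T -> U) (g : T -> V) t :
  continuous f t -> continuous g t -> continuous (fun z => (f z, g z)) t.
Proof.
  intros Hf Hg. apply (continuous_comp_2 f g pair); auto.
  apply continuous_ext with (f := fun p => p); [now intros [] | apply continuous_id].
Qed.

Section Smooth4.

Variable W : R -> R -> Prop.

Lemma smooth4_d_x f : smooth4_on W f -> smooth4_on W (d_x f).
Proof. now intros []. Qed.

Lemma smooth4_d_y f : smooth4_on W f -> smooth4_on W (d_y f).
Proof. now intros []. Qed.

Lemma smooth4_d_xd f : smooth4_on W f -> smooth4_on W (d_xd f).
Proof. now intros []. Qed.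

Lemma smooth4_d_yd f : smooth4_on W f -> smooth4_on W (d_yd f).
Proof. now intros []. Qed.

Lemma smooth4_ex_derive f x y a b : smooth4_on W f -> W x y ->
  ex_derive (fun s => f s y a b) x /\ ex_derive (fun s => f x s a b) y /\
  ex_derive (fun s => f x y s b) a /\ ex_derive (fun s => f x y a s) b.
Proof. intros [_ H _ _ _ _]. apply H. Qed.

Lemma smooth4_continuous_comp {T : UniformSpace} f (g1 g2 g3 g4 : T -> R) t :
  smooth4_on W f -> W (g1 t) (g2 t) ->
  continuous g1 t -> continuous g2 t -> continuous g3 t -> continuous g4 t ->
  continuous (fun z => f (g1 z) (g2 z) (g3 z) (g4 z)) t.
Proof.
  intros [Hc _ _ _ _ _] Hw H1 H2 H3 H4.
  apply (continuous_comp (fun z => (g1 z, g2 z, g3 z, g4 z))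
    (fun p : R * R * R * R =>
       f (fst (fst (fst p))) (snd (fst (fst p))) (snd (fst p)) (snd p))).
  - repeat apply continuous_pair; assumption.
  - now apply Hc.
Qed.

Lemma smooth4_continuity_2d f (g1 g2 g3 g4 : R -> R -> R) u v :
  smooth4_on W f -> W (g1 u v) (g2 u v) ->
  continuity_2d_pt g1 u v -> continuity_2d_pt g2 u v ->
  continuity_2d_pt g3 u v -> continuity_2d_pt g4 u v ->
  continuity_2d_pt (fun s t => f (g1 s t) (g2 s t) (g3 s t) (g4 s t)) u v.
Proof.
  intros Hs Hw H1 H2 H3 H4. apply continuity_2d_pt_filterlim.
  apply continuity_2d_pt_filterlim in H1, H2, H3, H4.
  exact (smooth4_continuous_comp f _ _ _ _ (u, v) Hs Hw H1 H2 H3 H4).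
Qed.

Lemma is_derive_smooth4_comp f X Y (f2 f3 : R -> R) t l2 l3 :
  smooth4_on W f -> W X Y -> is_derive f2 t l2 -> is_derive f3 t l3 ->
  is_derive (fun s => f X Y (f2 s) (f3 s)) t
    (d_xd f X Y (f2 t) (f3 t) * l2 + d_yd f X Y (f2 t) (f3 t) * l3).
Proof.
  intros Hs Hw D2 D3.
  apply (is_derive_comp_2d (f X Y) (d_xd f X Y) (d_yd f X Y)); auto;
    try (intros u v; apply Derive_correct; apply (smooth4_ex_derive f X Y u v Hs Hw)).
  eapply smooth4_continuity_2d with (f := d_xd f); eauto using smooth4_d_xd,
    continuity_2d_pt_const, continuity_2d_pt_id1, continuity_2d_pt_id2.
Qed.

End Smooth4.

Ltac slice_continuity :=
  eapply smooth4_continuous_comp; eauto using continuous_const, continuous_id.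

Ltac slice_continuity_of F :=
  first
    [ eapply smooth4_continuity_2d with (f := F); eauto using
        continuity_2d_pt_const, continuity_2d_pt_id1, continuity_2d_pt_id2
    | eapply smooth4_continuous_comp with (f := F);
        eauto using continuous_const, continuous_id ].

Section MixedPartials.

Variable W : R -> R -> Prop.
Hypothesis W_open : open2 W.

Lemma open2_locally_x x y : W x y -> locally x (fun u => W u y).
Proof.
  intros Hw. destruct (W_open x y Hw) as [e [He H]].
  exists (mkposreal e He). intros u Hu. apply H; [exact Hu |].
  rewrite Rminus_diag, Rabs_R0. exact He.
Qed.

Lemma open2_locally_y x y : W x y -> locally y (fun v => W x v).
Proof.
  intros Hw. destruct (W_open x y Hw) as [e [He H]].
  exists (mkposreal e He). intros v Hv. apply H; [| exact Hv].
  rewrite Rminus_diag, Rabs_R0. exact He.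
Qed.

Variable f : R -> R -> R -> R -> R.
Hypothesis f_smooth : smooth4_on W f.

Let fx_smooth := smooth4_d_x W f f_smooth.
Let fy_smooth := smooth4_d_y W f f_smooth.
Let fxd_smooth := smooth4_d_xd W f f_smooth.
Let fyd_smooth := smooth4_d_yd W f f_smooth.

Lemma d_xd_d_yd_comm x y a b : W x y -> d_xd (d_yd f) x y a b = d_yd (d_xd f) x y a b.
Proof.
  intros Hw. apply (schwarz_slice (fun s t => f x y s t) (fun _ => True)).
  - apply filter_true.
  - intros s t _.
    destruct (smooth4_ex_derive W f x y s t f_smooth Hw) as (_ & _ & ? & ?).
    destruct (smooth4_ex_derive W _ x y s t fyd_smooth Hw) as (_ & _ & ? & _).
    destruct (smooth4_ex_derive W _ x y s t fxd_smooth Hw) as (_ & _ & _ & ?).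
    auto.
  - slice_continuity_of (d_xd (d_yd f)). exact (smooth4_d_xd W _ fyd_smooth).
  - slice_continuity_of (d_yd (d_xd f)). exact (smooth4_d_yd W _ fxd_smooth).
Qed.

Lemma d_x_d_xd_comm x y a b : W x y -> d_x (d_xd f) x y a b = d_xd (d_x f) x y a b.
Proof.
  intros Hw. apply (schwarz_slice (fun s t => f s y t b) (fun s => W s y)).
  - now apply open2_locally_x.
  - intros s t Hs.
    destruct (smooth4_ex_derive W f s y t b f_smooth Hs) as (? & _ & ? & _).
    destruct (smooth4_ex_derive W _ s y t b fxd_smooth Hs) as (? & _).
    destruct (smooth4_ex_derive W _ s y t b fx_smooth Hs) as (_ & _ & ? & _).
    auto.
  - slice_continuity_of (d_x (d_xd f)). exact (smooth4_d_x W _ fxd_smooth).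
  - slice_continuity_of (d_xd (d_x f)). exact (smooth4_d_xd W _ fx_smooth).
Qed.

Lemma d_x_d_yd_comm x y a b : W x y -> d_x (d_yd f) x y a b = d_yd (d_x f) x y a b.
Proof.
  intros Hw. apply (schwarz_slice (fun s t => f s y a t) (fun s => W s y)).
  - now apply open2_locally_x.
  - intros s t Hs.
    destruct (smooth4_ex_derive W f s y a t f_smooth Hs) as (? & _ & _ & ?).
    destruct (smooth4_ex_derive W _ s y a t fyd_smooth Hs) as (? & _).
    destruct (smooth4_ex_derive W _ s y a t fx_smooth Hs) as (_ & _ & _ & ?).
    auto.
  - slice_continuity_of (d_x (d_yd f)). exact (smooth4_d_x W _ fyd_smooth).
  - slice_continuity_of (d_yd (d_x f)). exact (smooth4_d_yd W _ fx_smooth).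
Qed.

Lemma d_y_d_xd_comm x y a b : W x y -> d_y (d_xd f) x y a b = d_xd (d_y f) x y a b.
Proof.
  intros Hw. apply (schwarz_slice (fun s t => f x s t b) (fun s => W x s)).
  - now apply open2_locally_y.
  - intros s t Hs.
    destruct (smooth4_ex_derive W f x s t b f_smooth Hs) as (_ & ? & ? & _).
    destruct (smooth4_ex_derive W _ x s t b fxd_smooth Hs) as (_ & ? & _).
    destruct (smooth4_ex_derive W _ x s t b fy_smooth Hs) as (_ & _ & ? & _).
    auto.
  - slice_continuity_of (d_y (d_xd f)). exact (smooth4_d_y W _ fxd_smooth).
  - slice_continuity_of (d_xd (d_y f)). exact (smooth4_d_xd W _ fy_smooth).
Qed.

Lemma d_y_d_yd_comm x y a b : W x y -> d_y (d_yd f) x y a b = d_yd (d_y f) x y a b.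
Proof.
  intros Hw. apply (schwarz_slice (fun s t => f x s a t) (fun s => W x s)).
  - now apply open2_locally_y.
  - intros s t Hs.
    destruct (smooth4_ex_derive W f x s a t f_smooth Hs) as (_ & ? & _ & ?).
    destruct (smooth4_ex_derive W _ x s a t fyd_smooth Hs) as (_ & ? & _).
    destruct (smooth4_ex_derive W _ x s a t fy_smooth Hs) as (_ & _ & _ & ?).
    auto.
  - slice_continuity_of (d_y (d_yd f)). exact (smooth4_d_y W _ fyd_smooth).
  - slice_continuity_of (d_yd (d_y f)). exact (smooth4_d_yd W _ fy_smooth).
Qed.

End MixedPartials.

(* The integral of f da + g db along the path (0,0) -> (0,b) -> (a,b). *)
Definition velocity_primitive (f g : R -> R -> R -> R -> R) x y a b :=
  RInt (fun nu => f x y nu b) 0 a + RInt (fun s => g x y 0 s) 0 b.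

Lemma Kx_primitive c : Kx c = velocity_primitive (Bxx c) (Bxy c).
Proof. reflexivity. Qed.

Lemma Ky_primitive c : Ky c = velocity_primitive (Bxy c) (Byy c).
Proof. reflexivity. Qed.

Lemma velocity_primitive_00 f g x y : velocity_primitive f g x y 0 0 = 0.
Proof. unfold velocity_primitive. rewrite !RInt_point. apply Rplus_0_l. Qed.

Section VelocityForms.

Variable W : R -> R -> Prop.
Variables f g : R -> R -> R -> R -> R.
Hypothesis f_smooth : smooth4_on W f.
Hypothesis g_smooth : smooth4_on W g.

Lemma is_derive_velocity_primitive_xd x y a b : W x y ->
  is_derive (fun s => velocity_primitive f g x y s b) a (f x y a b).
Proof.
  intros Hw. rewrite <- (Rplus_0_r (f x y a b)).
  apply is_derive_Rplus; [| apply is_derive_Rconst].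
  apply (is_derive_RInt_0 (fun nu => f x y nu b)). intros t. slice_continuity.
Qed.

Lemma is_derive_velocity_primitive_yd x y a b : W x y ->
  (forall nu, d_yd f x y nu b = d_xd g x y nu b) ->
  is_derive (fun s => velocity_primitive f g x y a s) b (g x y a b).
Proof.
  intros Hw Hclosed.
  replace (g x y a b) with ((g x y a b - g x y 0 b) + g x y 0 b) by ring.
  apply is_derive_Rplus.
  2: apply (is_derive_RInt_0 (fun s => g x y 0 s)); intros t; slice_continuity.
  (* differentiate under the integral, then integrate d g / da back *)
  replace (g x y a b - g x y 0 b) with (RInt (fun nu => d_yd f x y nu b) 0 a).
  - apply (is_derive_RInt_param_loc (fun z t => f x y t z) (fun _ => True)).
    + apply filter_true.
    + intros u t _. apply (smooth4_ex_derive W f x y t u f_smooth Hw).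
    + intros u t _. slice_continuity.
    + intros t. slice_continuity_of (d_yd f). now apply smooth4_d_yd.
  - rewrite (RInt_ext _ (Derive (fun nu => g x y nu b))) by (intros; apply Hclosed).
    apply (RInt_Derive (fun nu => g x y nu b)).
    + intros t _. apply (smooth4_ex_derive W g x y t b g_smooth Hw).
    + intros t _. slice_continuity_of (d_xd g). now apply smooth4_d_xd.
Qed.

Hypothesis W_open : open2 W.

Lemma d_x_velocity_primitive x y a b : W x y ->
  d_x (velocity_primitive f g) x y a b = velocity_primitive (d_x f) (d_x g) x y a b.
Proof.
  intros Hw. apply is_derive_unique, is_derive_Rplus.
  - apply (is_derive_RInt_param_loc (fun z t => f z y t b) (fun u => W u y)).
    + now apply open2_locally_x.
    + intros u t Hu. apply (smooth4_ex_derive W f u y t b f_smooth Hu).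
    + intros u t Hu. slice_continuity.
    + intros t. slice_continuity_of (d_x f). now apply smooth4_d_x.
  - apply (is_derive_RInt_param_loc (fun z t => g z y 0 t) (fun u => W u y)).
    + now apply open2_locally_x.
    + intros u t Hu. apply (smooth4_ex_derive W g u y 0 t g_smooth Hu).
    + intros u t Hu. slice_continuity.
    + intros t. slice_continuity_of (d_x g). now apply smooth4_d_x.
Qed.

Lemma d_y_velocity_primitive x y a b : W x y ->
  d_y (velocity_primitive f g) x y a b = velocity_primitive (d_y f) (d_y g) x y a b.
Proof.
  intros Hw. apply is_derive_unique, is_derive_Rplus.
  - apply (is_derive_RInt_param_loc (fun z t => f x z t b) (fun u => W x u)).
    + now apply open2_locally_y.
    + intros u t Hu. apply (smooth4_ex_derive W f x u t b f_smooth Hu).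
    + intros u t Hu. slice_continuity.
    + intros t. slice_continuity_of (d_y f). now apply smooth4_d_y.
  - apply (is_derive_RInt_param_loc (fun z t => g x z 0 t) (fun u => W x u)).
    + now apply open2_locally_y.
    + intros u t Hu. apply (smooth4_ex_derive W g x u 0 t g_smooth Hu).
    + intros u t Hu. slice_continuity.
    + intros t. slice_continuity_of (d_y g). now apply smooth4_d_y.
Qed.

Hypothesis fg_closed :
  forall x y a b, W x y -> d_yd f x y a b = d_xd g x y a b.

Lemma d_x_closed x y a b : W x y -> d_yd (d_x f) x y a b = d_xd (d_x g) x y a b.
Proof.
  intros Hw.
  rewrite <- (d_x_d_yd_comm W), <- (d_x_d_xd_comm W) by auto.
  apply Derive_ext_loc. eapply filter_imp; [| exact (open2_locally_x W W_open x y Hw)].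
  intros u Hu. now apply fg_closed.
Qed.

Lemma d_y_closed x y a b : W x y -> d_yd (d_y f) x y a b = d_xd (d_y g) x y a b.
Proof.
  intros Hw.
  rewrite <- (d_y_d_yd_comm W), <- (d_y_d_xd_comm W) by auto.
  apply Derive_ext_loc. eapply filter_imp; [| exact (open2_locally_y W W_open x y Hw)].
  intros v Hv. now apply fg_closed.
Qed.

End VelocityForms.

Lemma helmholtz_velocity_closed U c : helmholtz U c ->
  (forall x y a b, U x y -> d_yd (Bxx c) x y a b = d_xd (Bxy c) x y a b) /\
  (forall x y a b, U x y -> d_yd (Bxy c) x y a b = d_xd (Byy c) x y a b).
Proof.
  intros Hh. split; intros x y a b Hu; destruct (Hh x y a b Hu) as (H1 & H2 & _); auto.
Qed.

Lemma kappa_gradient W c x y a b : loc_variational W c -> W x y ->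
  is_derive (fun s => Kx c x y s b) a (Bxx c x y a b) /\
  is_derive (fun s => Kx c x y a s) b (Bxy c x y a b) /\
  is_derive (fun s => Ky c x y s b) a (Bxy c x y a b) /\
  is_derive (fun s => Ky c x y a s) b (Byy c x y a b).
Proof.
  intros [(_ & _ & sBxx & sBxy & sByy) Hh] Hw.
  destruct (helmholtz_velocity_closed W c Hh) as [Cx Cy].
  rewrite !Kx_primitive, !Ky_primitive.
  split; [| split; [| split]].
  - exact (is_derive_velocity_primitive_xd W _ _ sBxx _ _ _ _ Hw).
  - exact (is_derive_velocity_primitive_yd W _ _ sBxx sBxy _ _ _ _ Hw
             (fun nu => Cx _ _ _ _ Hw)).
  - exact (is_derive_velocity_primitive_xd W _ _ sBxy _ _ _ _ Hw).
  - exact (is_derive_velocity_primitive_yd W _ _ sBxy sByy _ _ _ _ Hw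
             (fun nu => Cy _ _ _ _ Hw)).
Qed.

Section Helmholtz.

Variable W : R -> R -> Prop.
Variable c : coeffs.
Hypothesis W_open : open2 W.
Hypothesis c_variational : loc_variational W c.

Lemma Dfun_partial_xd x y a b : W x y ->
  is_derive (fun s => Dfun c x y s b) a (2 * (d_y (Bxx c) x y a b - d_x (Bxy c) x y a b)).
Proof.
  destruct c_variational as [(sAx & sAy & sBxx & sBxy & sByy) Hh]. intros Hw.
  destruct (helmholtz_velocity_closed W c Hh) as [Cxy _].
  eapply is_derive_replace.
  { apply is_derive_Rminus; apply Derive_correct.
    - apply (smooth4_ex_derive W _ x y a b (smooth4_d_yd W _ sAx) Hw).
    - apply (smooth4_ex_derive W _ x y a b (smooth4_d_xd W _ sAy) Hw). }
  change (d_xd (d_yd (Ax c)) x y a b - d_xd (d_xd (Ay c)) x y a b =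
          2 * (d_y (Bxx c) x y a b - d_x (Bxy c) x y a b)).
  (* the a-derivatives of the third and fifth Helmholtz conditions *)
  assert (EAx : d_yd (d_xd (Ax c)) x y a b = a * d_yd (d_x (Bxx c)) x y a b
                + d_y (Bxx c) x y a b + b * d_yd (d_y (Bxx c)) x y a b).
  { transitivity (Derive (fun s => a * d_x (Bxx c) x y a s + s * d_y (Bxx c) x y a s) b).
    - apply Derive_ext. intros s. destruct (Hh x y a s Hw) as (_ & _ & H & _). lra.
    - apply is_derive_unique. auto_derive.
      + destruct (smooth4_ex_derive W _ x y a b (smooth4_d_x W _ sBxx) Hw) as (_ & _ & _ & ?).
        destruct (smooth4_ex_derive W _ x y a b (smooth4_d_y W _ sBxx) Hw) as (_ & _ & _ & ?).
        auto.
      + unfold d_yd. ring. }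
  assert (EAy : d_xd (d_xd (Ay c)) x y a b = 2 * d_x (Bxy c) x y a b
                + 2 * a * d_xd (d_x (Bxy c)) x y a b + 2 * b * d_xd (d_y (Bxy c)) x y a b
                - d_xd (d_yd (Ax c)) x y a b).
  { transitivity (Derive (fun s => 2 * s * d_x (Bxy c) x y s b
                                  + 2 * b * d_y (Bxy c) x y s b - d_yd (Ax c) x y s b) a).
    - apply Derive_ext. intros s. destruct (Hh x y s b Hw) as (_ & _ & _ & _ & H & _). lra.
    - apply is_derive_unique. auto_derive.
      + destruct (smooth4_ex_derive W _ x y a b (smooth4_d_x W _ sBxy) Hw) as (_ & _ & ? & _).
        destruct (smooth4_ex_derive W _ x y a b (smooth4_d_y W _ sBxy) Hw) as (_ & _ & ? & _).
        destruct (smooth4_ex_derive W _ x y a b (smooth4_d_yd W _ sAx) Hw) as (_ & _ & ? & _).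
        auto.
      + unfold d_xd. ring. }
  rewrite EAy, (d_xd_d_yd_comm W), EAx, (d_x_closed W (Bxx c) (Bxy c)),
    (d_y_closed W (Bxx c) (Bxy c)) by auto.
  ring.
Qed.

Lemma Dfun_partial_yd x y a b : W x y ->
  is_derive (fun s => Dfun c x y a s) b (2 * (d_y (Bxy c) x y a b - d_x (Byy c) x y a b)).
Proof.
  destruct c_variational as [(sAx & sAy & sBxx & sBxy & sByy) Hh]. intros Hw.
  destruct (helmholtz_velocity_closed W c Hh) as [_ Cyy].
  eapply is_derive_replace.
  { apply is_derive_Rminus; apply Derive_correct.
    - apply (smooth4_ex_derive W _ x y a b (smooth4_d_yd W _ sAx) Hw).
    - apply (smooth4_ex_derive W _ x y a b (smooth4_d_xd W _ sAy) Hw). }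
  change (d_yd (d_yd (Ax c)) x y a b - d_yd (d_xd (Ay c)) x y a b =
          2 * (d_y (Bxy c) x y a b - d_x (Byy c) x y a b)).
  (* the b-derivatives of the fourth and fifth Helmholtz conditions *)
  assert (EAy : d_xd (d_yd (Ay c)) x y a b = d_x (Byy c) x y a b
                + a * d_xd (d_x (Byy c)) x y a b + b * d_xd (d_y (Byy c)) x y a b).
  { transitivity (Derive (fun s => s * d_x (Byy c) x y s b + b * d_y (Byy c) x y s b) a).
    - apply Derive_ext. intros s. destruct (Hh x y s b Hw) as (_ & _ & _ & H & _). lra.
    - apply is_derive_unique. auto_derive.
      + destruct (smooth4_ex_derive W _ x y a b (smooth4_d_x W _ sByy) Hw) as (_ & _ & ? & _).
        destruct (smooth4_ex_derive W _ x y a b (smooth4_d_y W _ sByy) Hw) as (_ & _ & ? & _).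
        auto.
      + unfold d_xd. ring. }
  assert (EAx : d_yd (d_yd (Ax c)) x y a b = 2 * a * d_yd (d_x (Bxy c)) x y a b
                + 2 * d_y (Bxy c) x y a b + 2 * b * d_yd (d_y (Bxy c)) x y a b
                - d_yd (d_xd (Ay c)) x y a b).
  { transitivity (Derive (fun s => 2 * a * d_x (Bxy c) x y a s
                                  + 2 * s * d_y (Bxy c) x y a s - d_xd (Ay c) x y a s) b).
    - apply Derive_ext. intros s. destruct (Hh x y a s Hw) as (_ & _ & _ & _ & H & _). lra.
    - apply is_derive_unique. auto_derive.
      + destruct (smooth4_ex_derive W _ x y a b (smooth4_d_x W _ sBxy) Hw) as (_ & _ & _ & ?).
        destruct (smooth4_ex_derive W _ x y a b (smooth4_d_y W _ sBxy) Hw) as (_ & _ & _ & ?).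
        destruct (smooth4_ex_derive W _ x y a b (smooth4_d_xd W _ sAy) Hw) as (_ & _ & _ & ?).
        auto.
      + unfold d_yd. ring. }
  rewrite EAx, <- (d_xd_d_yd_comm W), EAy, (d_x_closed W (Bxy c) (Byy c)),
    (d_y_closed W (Bxy c) (Byy c)) by auto.
  ring.
Qed.

Lemma d_kappa x y a b : W x y ->
  d_y (Kx c) x y a b - d_x (Ky c) x y a b = / 2 * Dfun c x y a b - / 2 * Dfun c x y 0 0.
Proof.
  pose proof c_variational as [(_ & _ & sBxx & sBxy & sByy) Hh]. intros Hw.
  destruct (helmholtz_velocity_closed W c Hh) as [Cxy Cyy].
  rewrite Kx_primitive, Ky_primitive, (d_y_velocity_primitive W), (d_x_velocity_primitive W)
    by auto.
  revert a b.
  apply eq_of_partials with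
    (Fa := fun a b => d_y (Bxx c) x y a b - d_x (Bxy c) x y a b)
    (Fb := fun a b => d_y (Bxy c) x y a b - d_x (Byy c) x y a b).
  - intros a b. apply is_derive_Rminus;
      apply is_derive_velocity_primitive_xd with W; auto using smooth4_d_x, smooth4_d_y.
  - intros a b. eapply is_derive_replace.
    + apply is_derive_Rminus;
        [apply is_derive_Rmult_const_l, Dfun_partial_xd, Hw | apply is_derive_Rconst].
    + simpl. field.
  - intros a b. apply is_derive_Rminus;
      apply is_derive_velocity_primitive_yd with W; auto using smooth4_d_x, smooth4_d_y;
      intros nu; [apply (d_y_closed W (Bxx c)) | apply (d_x_closed W (Bxy c))]; auto.
  - intros a b. eapply is_derive_replace.
    + apply is_derive_Rminus;
        [apply is_derive_Rmult_const_l, Dfun_partial_yd, Hw | apply is_derive_Rconst].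
    + simpl. field.
  - rewrite !velocity_primitive_00. ring.
Qed.

End Helmholtz.

Lemma B_transform U p1 p2 c1 c2 x y a b : same_source_form U p1 p2 c1 c2 -> U x y ->
  let J11 := d2_x p1 x y in let J12 := d2_y p1 x y in
  let J21 := d2_x p2 x y in let J22 := d2_y p2 x y in
  let Xd := J11 * a + J12 * b in let Yd := J21 * a + J22 * b in
  let bxx := Bxx c2 (p1 x y) (p2 x y) Xd Yd in
  let bxy := Bxy c2 (p1 x y) (p2 x y) Xd Yd in
  let byy := Byy c2 (p1 x y) (p2 x y) Xd Yd in
  Bxx c1 x y a b = (bxx * J11 + bxy * J21) * J11 + (bxy * J11 + byy * J21) * J21 /\
  Bxy c1 x y a b = (bxx * J12 + bxy * J22) * J11 + (bxy * J12 + byy * J22) * J21 /\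
  Bxy c1 x y a b = (bxx * J11 + bxy * J21) * J12 + (bxy * J11 + byy * J21) * J22 /\
  Byy c1 x y a b = (bxx * J12 + bxy * J22) * J12 + (bxy * J12 + byy * J22) * J22.
Proof.
  intros Hs Hu.
  (* the law is affine in the accelerations: compare the coefficients *)
  destruct (Hs x y a b 0 0 Hu) as [E0x E0y].
  destruct (Hs x y a b 1 0 Hu) as [E1x E1y].
  destruct (Hs x y a b 0 1 Hu) as [E2x E2y].
  cbv zeta in *. unfold eps_x, eps_y in *.
  repeat split; lra.
Qed.

Lemma is_derive_kappa_comp W c X Y (f2 f3 : R -> R) t l2 l3 m1 m2 :
  loc_variational W c -> W X Y -> is_derive f2 t l2 -> is_derive f3 t l3 ->
  is_derive (fun s => Kx c X Y (f2 s) (f3 s) * m1 + Ky c X Y (f2 s) (f3 s) * m2) t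
    ((Bxx c X Y (f2 t) (f3 t) * l2 + Bxy c X Y (f2 t) (f3 t) * l3) * m1 +
     (Bxy c X Y (f2 t) (f3 t) * l2 + Byy c X Y (f2 t) (f3 t) * l3) * m2).
Proof.
  intros Hl Hw D2 D3. pose proof Hl as [(_ & _ & sBxx & sBxy & sByy) _].
  assert (Kgrad := fun u v => kappa_gradient W c X Y u v Hl Hw).
  apply is_derive_Rplus; apply is_derive_Rmult_const_r.
  - apply (is_derive_comp_2d (Kx c X Y) (Bxx c X Y) (Bxy c X Y)); trivial.
    + intros u v. now destruct (Kgrad u v) as (? & _).
    + intros u v. now destruct (Kgrad u v) as (_ & ? & _).
    + slice_continuity_of (Bxx c).
  - apply (is_derive_comp_2d (Ky c X Y) (Bxy c X Y) (Byy c X Y)); trivial.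
    + intros u v. now destruct (Kgrad u v) as (_ & _ & ? & _).
    + intros u v. now destruct (Kgrad u v) as (_ & _ & _ & ?).
    + slice_continuity_of (Bxy c).
Qed.

Lemma eq_kappa_pullback W c X Y j11 j12 j21 j22 m1 m2 (F Fa Fb : R -> R -> R) :
  loc_variational W c -> W X Y ->
  (forall a b, is_derive (fun s => F s b) a (Fa a b)) ->
  (forall a b, is_derive (fun s => F a s) b (Fb a b)) ->
  (forall a b,
     let u := j11 * a + j12 * b in let v := j21 * a + j22 * b in
     Fa a b = (Bxx c X Y u v * j11 + Bxy c X Y u v * j21) * m1 +
              (Bxy c X Y u v * j11 + Byy c X Y u v * j21) * m2 /\
     Fb a b = (Bxx c X Y u v * j12 + Bxy c X Y u v * j22) * m1 +
              (Bxy c X Y u v * j12 + Byy c X Y u v * j22) * m2) ->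
  F 0 0 = 0 ->
  forall a b, F a b =
    Kx c X Y (j11 * a + j12 * b) (j21 * a + j22 * b) * m1 +
    Ky c X Y (j11 * a + j12 * b) (j21 * a + j22 * b) * m2.
Proof.
  intros Hl Hw HFa HFb HB H0.
  apply eq_of_partials with (Fa := Fa) (Fb := Fb); auto.
  - intros a b. eapply is_derive_replace.
    + apply (is_derive_kappa_comp W); auto; auto_derive; easy.
    + symmetry. simpl. rewrite (proj1 (HB a b)). ring.
  - intros a b. eapply is_derive_replace.
    + apply (is_derive_kappa_comp W); auto; auto_derive; easy.
    + symmetry. simpl. rewrite (proj2 (HB a b)). ring.
  - rewrite H0, !Rmult_0_r, !Rplus_0_r, Kx_primitive, Ky_primitive,
      !velocity_primitive_00.
    ring.
Qed.

Lemma kappa_chart_independent U V p1 p2 c1 c2 x y a b :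
  loc_variational U c1 -> loc_variational V c2 -> same_source_form U p1 p2 c1 c2 ->
  U x y -> V (p1 x y) (p2 x y) ->
  let X := p1 x y in let Y := p2 x y in
  let J11 := d2_x p1 x y in let J12 := d2_y p1 x y in
  let J21 := d2_x p2 x y in let J22 := d2_y p2 x y in
  let Xd := J11 * a + J12 * b in let Yd := J21 * a + J22 * b in
  Kx c1 x y a b = Kx c2 X Y Xd Yd * J11 + Ky c2 X Y Xd Yd * J21 /\
  Ky c1 x y a b = Kx c2 X Y Xd Yd * J12 + Ky c2 X Y Xd Yd * J22.
Proof.
  intros H1 H2 Hs Hu HV. cbv zeta.
  assert (Kgrad := fun a b => kappa_gradient U c1 x y a b H1 Hu).
  assert (HB := fun a b => B_transform U p1 p2 c1 c2 x y a b Hs Hu).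
  cbv zeta in HB.
  split; revert a b.
  - apply (eq_kappa_pullback V c2 _ _ _ _ _ _ _ _ _ (Bxx c1 x y) (Bxy c1 x y) H2 HV).
    + intros a b. now destruct (Kgrad a b) as (? & _).
    + intros a b. now destruct (Kgrad a b) as (_ & ? & _).
    + intros a b. cbv zeta. destruct (HB a b) as (? & ? & ? & ?). now split.
    + rewrite Kx_primitive. apply velocity_primitive_00.
  - apply (eq_kappa_pullback V c2 _ _ _ _ _ _ _ _ _ (Bxy c1 x y) (Byy c1 x y) H2 HV).
    + intros a b. now destruct (Kgrad a b) as (_ & _ & ? & _).
    + intros a b. now destruct (Kgrad a b) as (_ & _ & _ & ?).
    + intros a b. cbv zeta. destruct (HB a b) as (? & ? & ? & ?). now split.
    + rewrite Ky_primitive. apply velocity_primitive_00.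
Qed.

Lemma is_derive_affine_at_rest W (A B1 B2 : R -> R -> R -> R -> R) X Y
    (f2 f3 q1 q2 : R -> R) t u v l2 l3 :
  smooth4_on W A -> smooth4_on W B1 -> smooth4_on W B2 -> W X Y ->
  is_derive f2 t l2 -> is_derive f3 t l3 -> f2 t = u -> f3 t = v ->
  is_derive q1 t 0 -> is_derive q2 t 0 -> q1 t = 0 -> q2 t = 0 ->
  is_derive (fun s => A X Y (f2 s) (f3 s) + B1 X Y (f2 s) (f3 s) * q1 s
                      + B2 X Y (f2 s) (f3 s) * q2 s) t
    (d_xd A X Y u v * l2 + d_yd A X Y u v * l3).
Proof.
  intros sA sB1 sB2 Hw D2 D3 <- <- Dq1 Dq2 q1t q2t.
  eapply is_derive_replace.
  - apply is_derive_Rplus; [apply is_derive_Rplus |].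
    + apply (is_derive_smooth4_comp W); eassumption.
    + apply is_derive_Rmult; [apply (is_derive_smooth4_comp W); eassumption | exact Dq1].
    + apply is_derive_Rmult; [apply (is_derive_smooth4_comp W); eassumption | exact Dq2].
  - rewrite q1t, q2t. simpl. ring.
Qed.

Lemma omega_chart_independent U V p1 p2 c1 c2 x y :
  loc_variational V c2 -> same_source_form U p1 p2 c1 c2 ->
  U x y -> V (p1 x y) (p2 x y) ->
  / 2 * Dfun c1 x y 0 0 =
  / 2 * Dfun c2 (p1 x y) (p2 x y) 0 0 *
    (d2_x p1 x y * d2_y p2 x y - d2_y p1 x y * d2_x p2 x y).
Proof.
  intros [(sAx & sAy & sBxx & sBxy & sByy) _] Hs Hu HV.
  assert (S := Hs x y). cbv zeta in S.
  set (X := p1 x y) in *. set (Y := p2 x y) in *.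
  set (J11 := d2_x p1 x y) in *. set (J12 := d2_y p1 x y) in *.
  set (J21 := d2_x p2 x y) in *. set (J22 := d2_y p2 x y) in *.
  (* at zero velocity the accelerations, quadratic in the velocity, are flat *)
  assert (DAx : d_yd (Ax c1) x y 0 0 =
    (d_xd (Ax c2) X Y 0 0 * J12 + d_yd (Ax c2) X Y 0 0 * J22) * J11 +
    (d_xd (Ay c2) X Y 0 0 * J12 + d_yd (Ay c2) X Y 0 0 * J22) * J21).
  { apply is_derive_unique. eapply is_derive_ext.
    { intros s. symmetry. etransitivity; [| exact (proj1 (S 0 s 0 0 Hu))].
      simpl. unfold eps_x. ring. }
    unfold eps_x, eps_y.
    apply is_derive_Rplus; apply is_derive_Rmult_const_r;
      apply (is_derive_affine_at_rest V); trivial;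
      solve [ring | auto_derive; [easy | ring]]. }
  assert (DAy : d_xd (Ay c1) x y 0 0 =
    (d_xd (Ax c2) X Y 0 0 * J11 + d_yd (Ax c2) X Y 0 0 * J21) * J12 +
    (d_xd (Ay c2) X Y 0 0 * J11 + d_yd (Ay c2) X Y 0 0 * J21) * J22).
  { apply is_derive_unique. eapply is_derive_ext.
    { intros s. symmetry. etransitivity; [| exact (proj2 (S s 0 0 0 Hu))].
      simpl. unfold eps_y. ring. }
    unfold eps_x, eps_y.
    apply is_derive_Rplus; apply is_derive_Rmult_const_r;
      apply (is_derive_affine_at_rest V); trivial;
      solve [ring | auto_derive; [easy | ring]]. }
  unfold Dfun. rewrite DAx, DAy. ring.
Qed.

Theorem theorem3p4
  (U V : R -> R -> Prop) (p1 p2 q1 q2 : R -> R -> R) (c1 c2 : coeffs) :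
  is_diffeo U V p1 p2 q1 q2 ->
  loc_variational U c1 ->
  loc_variational V c2 ->
  same_source_form U p1 p2 c1 c2 ->
  (* omega = 1/2 D(x,y,0,0) dx /\ dy is chart independent *)
  (forall x y, U x y ->
     / 2 * Dfun c1 x y 0 0 =
     / 2 * Dfun c2 (p1 x y) (p2 x y) 0 0 *
       (d2_x p1 x y * d2_y p2 x y - d2_y p1 x y * d2_x p2 x y)) /\
  (* kappa = - Kx dx - Ky dy is chart independent *)
  (forall x y a b, U x y ->
     let X := p1 x y in let Y := p2 x y in
     let J11 := d2_x p1 x y in let J12 := d2_y p1 x y in
     let J21 := d2_x p2 x y in let J22 := d2_y p2 x y in
     let Xd := J11 * a + J12 * b in let Yd := J21 * a + J22 * b in
     Kx c1 x y a b = Kx c2 X Y Xd Yd * J11 + Ky c2 X Y Xd Yd * J21 /\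
     Ky c1 x y a b = Kx c2 X Y Xd Yd * J12 + Ky c2 X Y Xd Yd * J22) /\
  (* alpha' - omega = d kappa in the chart: equality of the dx^dy, dx^dxd,
     dx^dyd, dy^dxd, dy^dyd components (dxd^dyd components are both 0) *)
  (forall x y a b, U x y ->
     d_y (Kx c1) x y a b - d_x (Ky c1) x y a b =
       / 2 * Dfun c1 x y a b - / 2 * Dfun c1 x y 0 0 /\
     d_xd (Kx c1) x y a b = Bxx c1 x y a b /\
     d_yd (Kx c1) x y a b = Bxy c1 x y a b /\
     d_xd (Ky c1) x y a b = Bxy c1 x y a b /\
     d_yd (Ky c1) x y a b = Byy c1 x y a b).
Proof.
  intros Hd H1 H2 Hs.
  destruct Hd as (U_open & _ & _ & _ & _ & _ & Hmaps & _).
  assert (HV : forall x y, U x y -> V (p1 x y) (p2 x y)) by (intros x y Hu; apply Hmaps, Hu).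
  split; [| split].
  - intros x y Hu. exact (omega_chart_independent U V p1 p2 c1 c2 x y H2 Hs Hu (HV x y Hu)).
  - intros x y a b Hu.
    exact (kappa_chart_independent U V p1 p2 c1 c2 x y a b H1 H2 Hs Hu (HV x y Hu)).
  - intros x y a b Hu.
    destruct (kappa_gradient U c1 x y a b H1 Hu) as (Gxx & Gxy & Gyx & Gyy).
    split; [exact (d_kappa U c1 U_open H1 x y a b Hu) |].
    repeat split; apply is_derive_unique; assumption.
Qed.
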